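(* Let $\mathcal{P}$ and $\mathcal{N}$ be disjoint finite index sets (positives and negatives) with $|\mathcal{P}|\ge1$, with real logits $(s_i)_{i\in\mathcal{P}\cup\mathcal{N}}$ and, for $i\in\mathcal{P}$, values $\mathrm{IoU}_i\in[0,1]$, and fix $\delta\ge0$. The bucketed algorithm described in the context computes all Bucketed AP Loss gradients (respectively all Bucketed RS Loss gradients) $g_i$, $i\in\mathcal{P}\cup\mathcal{N}$, in time $\mathcal{O}\big(\max\big((|\mathcal{P}|+|\mathcal{N}|)\log(|\mathcal{P}|+|\mathcal{N}|),\,|\mathcal{P}|^2\big)\big)$.
   Context: Smoothed step function: $H(x)=0$ for $x<-\delta$, $H(x)=\frac{x}{2\delta}+\frac12$ for $-\delta\le x\le\delta$, $H(x)=1$ for $x>\delta$ (for $\delta=0$: $H(x)=1$ if $x>0$, $0$ if $x<0$). $x_{ij}=s_j-s_i$. Ratios with zero denominator are taken as $0$. Buckets: sort all logits decreasingly; the positives appear as $\hat s^+_1\ge\dots\ge\hat s^+_{|\mathcal{P}|}$; $B_1$ is the set of negatives above $\hat s^+_1$, $B_k$ the negatives between $\hat s^+_{k-1}$ and $\hat s^+_k$, $B_{|\mathcal{P}|+1}$ the negatives below $\hat s^+_{|\mathcal{P}|}$ (so there are at most $|\mathcal{P}|+1$ buckets); $b_k=|B_k|$; for nonempty $B_k$ the prototype logit $s^b_k$ is the mean logit of $B_k$ and $x^b_{ik}=s^b_k-s_i$. For $i\in\mathcal{P}$: $N^b_{FP}(i)=\sum_kH(x^b_{ik})b_k$, $\ell^b_R(i)=\frac{N^b_{FP}(i)}{\sum_{j\in\mathcal{P}}H(x_{ij})+N^b_{FP}(i)}$,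 $p(k^b|i)=b_kH(x^b_{ik})/N^b_{FP}(i)$; $\mathrm{rank}^+(i)=\sum_{j\in\mathcal{P}}H(x_{ij})$; sorting error $\ell_S(i)=\frac{1}{\mathrm{rank}^+(i)}\sum_{j\in\mathcal{P}}H(x_{ij})(1-\mathrm{IoU}_j)$; target sorting error $\ell^*_S(i)=\frac{\sum_{j\in\mathcal{P}}H(x_{ij})[\mathrm{IoU}_j\ge\mathrm{IoU}_i](1-\mathrm{IoU}_j)}{\sum_{j\in\mathcal{P}}H(x_{ij})[\mathrm{IoU}_j\ge\mathrm{IoU}_i]}$; sorting pmf $p_S(j|i)=\frac{H(x_{ij})[\mathrm{IoU}_j<\mathrm{IoU}_i]}{\sum_{k\in\mathcal{P}}H(x_{ik})[\mathrm{IoU}_k<\mathrm{IoU}_i]}$. Bucketed AP gradients: $g_i=-\frac{1}{|\mathcal{P}|}\ell^b_R(i)$ for $i\in\mathcal{P}$, and $g_i=\frac{1}{|\mathcal{P}|}\sum_{j\in\mathcal{P}}\ell^b_R(j)p(k^b|j)\frac{1}{b_k}$ for a negative $i\in B_k$. Bucketed RS gradients: same for negatives, and for $i\in\mathcal{P}$, $g_i=\frac{1}{|\mathcal{P}|}\big(-\ell^b_R(i)+\ell^*_S(i)-\ell_S(i)+\sum_{j\in\mathcal{P}}(\ell_S(j)-\ell^*_S(j))p_S(i|j)\big)$. The bucketed algorithm: (1) sort all logits; (2) form the buckets and prototype logits in one pass; (3) compute all $x^b_{ik}$, $i\in\mathcal{P}$, over prototypes; (4) compute $\ell^b_R(i)$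 for all $i\in\mathcal{P}$; (5) compute the primary terms $\ell^b_R(i)p(k^b|i)$ for all positive/prototype pairs; (6)–(8) (RS only) compute $\ell_S,\ell^*_S$ and the positive–positive terms $(\ell_S(i)-\ell^*_S(i))p_S(j|i)$; (9)–(10) sum primary terms to get the gradients of positives and of each prototype; (11) divide each prototype's gradient by $b_k$ and assign it to every negative of $B_k$; (12) normalize by $|\mathcal{P}|$. *)

From mathcomp Require Import all_boot all_order all_algebra.

Set Implicit Arguments.
Unset Strict Implicit.
Unset Printing Implicit Defensive.

Import Order.TTheory GRing.Theory Num.Theory.
Local Open Scope ring_scope.

(* Cost monad: a value together with the number of unit-cost steps.   *)
Definition C (A : Type) := (A * nat)%type.
Definition retC {A} (a : A) : C A := (a, 0%N).
Definition step {A} (a : A) : C A := (a, 1%N).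
(* an operation charged k unit steps (used for O(k) list splitting) *)
Definition costed {A} (k : nat) (a : A) : C A := (a, k).
Definition bindC {A B} (m : C A) (f : A -> C B) : C B :=
  let '(a, c) := m in let '(b, d) := f a in (b, (c + d)%N).

Fixpoint foldM {A B} (f : A -> B -> C A) (a : A) (s : seq B) : C A :=
  match s with
  | [::] => retC a
  | x :: s' => bindC (f a x) (fun a' => foldM f a' s')
  end.

Definition mapM {A B} (f : A -> C B) (s : seq A) : C (seq B) :=
  foldr (fun x acc => bindC (f x) (fun y => bindC acc (fun ys => retC (y :: ys))))
        (retC [::]) s.

(* arrays are modelled as functions nat -> A with O(1) read / write *)
Definition upd {A} (arr : nat -> A) (i : nat) (v : A) : nat -> A :=
  fun t => if t == i then v else arr t.

Definition tabulate {A} (n : nat) (f : nat -> C A) (dflt : A) : C (nat -> A) :=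
  foldM (fun arr i => bindC (f i) (fun v => step (upd arr i v)))
        (fun _ => dflt) (iota 0 n).

Section MergeSort.
Variables (T : Type) (le : T -> T -> bool).

Fixpoint mergeM (s1 : seq T) : seq T -> C (seq T) :=
  match s1 with
  | [::] => fun s2 => retC s2
  | x :: s1' =>
    fix mg (s2 : seq T) : C (seq T) :=
      match s2 with
      | [::] => retC s1
      | y :: s2' =>
        if le x y then bindC (mergeM s1' s2) (fun r => step (x :: r))
        else bindC (mg s2') (fun r => step (y :: r))
      end
  end.

Fixpoint msortF (fuel : nat) (s : seq T) : C (seq T) :=
  match fuel with
  | 0%N => retC s
  | f.+1 =>
    match s with
    | [::] => retC s
    | [:: _] => retC s
    | _ =>
      let h := (size s)./2 in
      bindC (costed (size s) (take h s, drop h s)) (fun p =>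
      bindC (msortF f p.1) (fun r1 =>
      bindC (msortF f p.2) (fun r2 => mergeM r1 r2)))
    end
  end.

Definition msortM (s : seq T) : C (seq T) := msortF (size s) s.
End MergeSort.

Section Bucketed.
Variable R : realFieldType.

(* Smoothed step function.  MathComp's x / 0 = 0 implements the       *)
(* "zero denominator => 0" rule; for delta = 0 this gives H 0 = 1/2.  *)
Definition Hstep (delta x : R) : R :=
  if x < - delta then 0 else if delta < x then 1 else x / (2 * delta) + 1 / 2.

(* Mathematical specification.  Positives are indexed by 0..np-1 with *)
(* logits sp and IoUs iou; negatives by 0..nn-1 with logits sn.       *)
Section Spec.
Variables (delta : R) (np nn : nat) (sp sn iou : nat -> R).

Local Notation H := (Hstep delta).
Definition xpp (i j : nat) : R := sp j - sp i.

(* 0-based bucket index of negative j: the number of positives whose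
   logit is strictly larger (ties: the negative is placed above). *)
Definition bucket_of (j : nat) : nat := (\sum_(i < np) nat_of_bool (sn j < sp i)%R)%N.
Definition bsize (k : nat) : nat := (\sum_(j < nn) nat_of_bool (bucket_of j == k))%N.
Definition proto (k : nat) : R :=
  (\sum_(j < nn | bucket_of j == k) sn j) / (bsize k)%:R.

Definition NFPb (i : nat) : R :=
  \sum_(k < np.+1) Hstep delta (proto k - sp i) * (bsize k)%:R.
Definition lRb (i : nat) : R :=
  NFPb i / (\sum_(j < np) H (xpp i j) + NFPb i).
Definition pkb (k i : nat) : R := (bsize k)%:R * H (proto k - sp i) / NFPb i.

Definition rankp (i : nat) : R := \sum_(j < np) H (xpp i j).
Definition lS (i : nat) : R :=
  (\sum_(j < np) H (xpp i j) * (1 - iou j)) / rankp i.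
Definition lSstar (i : nat) : R :=
  (\sum_(j < np) H (xpp i j) * (nat_of_bool (iou i <= iou j)%R)%:R * (1 - iou j))
  / (\sum_(j < np) H (xpp i j) * (nat_of_bool (iou i <= iou j)%R)%:R).
Definition pS (j i : nat) : R :=
  H (xpp i j) * (nat_of_bool (iou j < iou i)%R)%:R
  / (\sum_(k < np) H (xpp i k) * (nat_of_bool (iou k < iou i)%R)%:R).

Definition gAP_pos (i : nat) : R := - (np%:R)^-1 * lRb i.
Definition gRS_pos (i : nat) : R :=
  (np%:R)^-1 * (- lRb i + lSstar i - lS i
                + \sum_(j < np) (lS j - lSstar j) * pS i j).
Definition g_neg (j : nat) : R :=
  (np%:R)^-1 * \sum_(i < np)
     lRb i * pkb (bucket_of j) i * ((bsize (bucket_of j))%:R)^-1.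
End Spec.

Definition item := (R * bool * nat)%type. (* logit, is_positive, index *)

(* decreasing order; on equal logits negatives come first *)
Definition before (a b : item) : bool :=
  let '(va, pa, _) := a in let '(vb, pb, _) := b in
  (vb < va) || ((va == vb) && (pa ==> pb)).

Record bstate := BState {
  bs_k : nat;             (* current bucket index *)
  bs_cnt : nat;           (* number of negatives in current bucket *)
  bs_sum : R;             (* sum of their logits *)
  bs_size : nat -> nat;
  bs_proto : nat -> R;
  bs_of : nat -> nat      (* array: negative index -> bucket index *)
}.

Definition close_bucket (st : bstate) : bstate :=
  BState (bs_k st).+1 0 0
         (upd (bs_size st) (bs_k st) (bs_cnt st))
         (upd (bs_proto st) (bs_k st) (bs_sum st / (bs_cnt st)%:R))
         (bs_of st).

Definition pass_item (st : bstate) (it : item) : C bstate :=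
  let '(v, p, j) := it in
  if p then step (close_bucket st)
  else step (BState (bs_k st) (bs_cnt st).+1 (bs_sum st + v)
                    (bs_size st) (bs_proto st) (upd (bs_of st) j (bs_k st))).

Definition init_bstate : bstate :=
  BState 0 0 0 (fun _ => 0%N) (fun _ => 0) (fun _ => 0%N).

Definition sumM (n : nat) (f : nat -> R) : C R :=
  foldM (fun acc j => step (acc + f j)) 0 (iota 0 n).

Definition bucketed (rs : bool) (delta : R) (np nn : nat)
    (sp sn iou : nat -> R) : C ((nat -> R) * (nat -> R)) :=
  let H := Hstep delta in
  bindC (mapM (fun i => step ((sp i, true, i) : item)) (iota 0 np)) (fun lp =>
  bindC (mapM (fun j => step ((sn j, false, j) : item)) (iota 0 nn)) (fun ln =>
  bindC (costed (size lp) (lp ++ ln)) (fun all =>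
  bindC (msortM before all) (fun sorted =>
  bindC (foldM pass_item init_bstate sorted) (fun st0 =>
  bindC (step (close_bucket st0)) (fun st =>
  let sz := bs_size st in let pr := bs_proto st in let bof := bs_of st in
  bindC (tabulate np (fun i =>
           sumM np.+1 (fun k => H (pr k - sp i) * (sz k)%:R)) 0) (fun nfp =>
  bindC (tabulate np (fun i =>
           bindC (sumM np (fun j => H (sp j - sp i))) (fun rp =>
           step (nfp i / (rp + nfp i)))) 0) (fun lR =>
  bindC (tabulate np (fun i =>
           tabulate np.+1 (fun k =>
             step (lR i * ((sz k)%:R * H (pr k - sp i) / nfp i))) 0)
         (fun _ => 0)) (fun prim =>
  bindC (if rs then
           bindC (tabulate np (fun i =>
                    bindC (sumM np (fun j => H (sp j - sp i) * (1 - iou j))) (fun num =>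
                    bindC (sumM np (fun j => H (sp j - sp i))) (fun den =>
                    step (num / den)))) 0) (fun lSa =>
           bindC (tabulate np (fun i =>
                    bindC (sumM np (fun j => H (sp j - sp i)
                              * (nat_of_bool (iou i <= iou j)%R)%:R * (1 - iou j))) (fun num =>
                    bindC (sumM np (fun j => H (sp j - sp i)
                              * (nat_of_bool (iou i <= iou j)%R)%:R)) (fun den =>
                    step (num / den)))) 0) (fun lSs =>
           bindC (tabulate np (fun i =>
                    sumM np (fun k => H (sp k - sp i) * (nat_of_bool (iou k < iou i)%R)%:R)) 0)
                 (fun dS =>
           tabulate np (fun i =>
             bindC (sumM np (fun j => (lSa j - lSs j)
                       * (H (sp i - sp j) * (nat_of_bool (iou i < iou j)%R)%:R / dS j))) (fun pp =>
             step (- lR i + lSs i - lSa i + pp))) 0)))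
         else tabulate np (fun i => step (- lR i)) 0) (fun gpos_raw =>
  bindC (tabulate np.+1 (fun k => sumM np (fun i => prim i k)) 0) (fun gproto =>
  bindC (tabulate nn (fun j => step (gproto (bof j) / (sz (bof j))%:R)) 0)
        (fun gneg_raw =>
  bindC (tabulate np (fun i => step (gpos_raw i / np%:R)) 0) (fun gpos =>
  bindC (tabulate nn (fun j => step (gneg_raw j / np%:R)) 0) (fun gneg =>
  retC (gpos, gneg))))))))))))))).

End Bucketed.

From mathcomp Require Import all_boot all_order all_algebra.
From mathcomp Require Import zify.
Import Order.TTheory GRing.Theory Num.Theory.

Set Implicit Arguments.
Unset Strict Implicit.
Unset Printing Implicit Defensive.

(** Correctness and cost are proved together in a Hoare logic for the cost
    monad: [within m c Q] says that [m] returns a value satisfying [Q] after at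
    most [c] unit steps. Merge sort of the [n = |P| + |N|] items costs
    [2 n ⌈log2 n⌉]. In the sorted order a negative [j] is preceded by exactly
    [bucket_of j] positives (ties are broken with negatives first, matching the
    strict inequality in [bucket_of]), so one linear scan keeping a running
    count and sum yields every [b_k], every prototype logit and the bucket of
    every negative. Each later step fills an array over positives, prototypes or
    negatives with sums of length at most [|P| + 1], for [O(|P|^2 + |N|)] steps
    in total. Finally [⌈log2 n⌉ <= ⌊log2 n⌋ + 1], and [n] is itself bounded by
    [max (n ⌊log2 n⌋) (|P|^2)] as soon as [|P| >= 1]. *)

Definition within {A} (m : C A) (c : nat) (Q : A -> Prop) : Prop :=
  Q m.1 /\ m.2 <= c.

Lemma within_bind A B (m : C A) (f : A -> C B) c1 c2 (Q1 : A -> Prop) Q :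
  within m c1 Q1 -> (forall a, Q1 a -> within (f a) c2 Q) ->
  within (bindC m f) (c1 + c2) Q.
Proof.
case: m => a ca [/= Qa le_ca] /(_ a Qa); rewrite /bindC.
by case: (f a) => b cb [/= Qb le_cb]; split=> //; apply: leq_add.
Qed.

Lemma within_bind_ret A B (m : C A) (f : A -> B) c (Q1 : A -> Prop) Q :
  within m c Q1 -> (forall a, Q1 a -> Q (f a)) ->
  within (bindC m (fun a => retC (f a))) c Q.
Proof. by case: m => a ca [/= Qa le_ca] Qf; rewrite /= addn0; split; [apply: Qf|]. Qed.

Lemma within_weaken A (m : C A) c c' (Q Q' : A -> Prop) :
  within m c Q -> c <= c' -> (forall a, Q a -> Q' a) -> within m c' Q'.
Proof. by case=> Qm le_c le_cc' QQ'; split; [apply: QQ'|apply: leq_trans le_cc']. Qed.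

Lemma within_le A (m : C A) c c' (Q : A -> Prop) : within m c Q -> c <= c' -> within m c' Q.
Proof. by move=> Qm le_cc'; apply: within_weaken Qm le_cc' _. Qed.

Lemma bindCA A B D (m : C A) (f : A -> C B) (g : B -> C D) :
  bindC (bindC m f) g = bindC m (fun a => bindC (f a) g).
Proof.
by rewrite /bindC; case: m => a c; case: (f a) => b d; case: (g b) => e k; rewrite addnA.
Qed.

Lemma foldM_rcons A B (f : A -> B -> C A) a t x :
  foldM f a (rcons t x) = bindC (foldM f a t) (fun a' => f a' x).
Proof.
elim: t a => [|y t IHt] a /=; first by rewrite /bindC /retC; case: (f a x) => b d; rewrite addn0.
by rewrite bindCA /bindC; case: (f a y) => a1 c1; rewrite IHt.
Qed.

Lemma within_step A (a : A) (Q : A -> Prop) : Q a -> within (step a) 1 Q.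
Proof. by []. Qed.

Lemma within_costed A k (a : A) (Q : A -> Prop) : Q a -> within (costed k a) k Q.
Proof. by []. Qed.

Lemma within_mapM_step A B (g : A -> B) (l : seq A) :
  within (mapM (fun x => step (g x)) l) (size l) (eq^~ (map g l)).
Proof.
elim: l => [|x l [/= IHv IHc]] //; rewrite /mapM /=.
by move: IHv IHc; rewrite /mapM; case: foldr => ys c /= -> le_c; rewrite addn0.
Qed.

Lemma within_sumM (R : realFieldType) n (f : nat -> R) :
  within (sumM n f) n (eq^~ (\sum_(j < n) f j)%R).
Proof.
suff foldE a l : foldM (fun acc j => step (acc + f j)%R) a l = (a + \sum_(j <- l) f j, size l)%R.
  by rewrite /sumM foldE add0r size_iota -(big_mkord xpredT) /index_iota subn0.
elim: l a => [|x l IHl] a /=; first by rewrite big_nil addr0.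
by rewrite IHl big_cons addrA.
Qed.

Lemma within_tabulate A n (f : nat -> C A) d c (P : nat -> A -> Prop) :
  (forall i, i < n -> within (f i) c (P i)) ->
  within (tabulate n f d) (n * c.+1) (fun arr => forall i, i < n -> P i (arr i)).
Proof.
move=> Pf; rewrite /tabulate.
have foldP l arr : (forall i, i \in l -> within (f i) c (P i)) ->
    within (foldM (fun arr i => bindC (f i) (fun v => step (upd arr i v))) arr l)
      (size l * c.+1)
      (fun arr' => forall i, if i \in l then P i (arr' i) else arr' i = arr i).
  elim: l arr => [|x l IHl] arr Pl /=; first by split.
  rewrite mulSn -{1}[c.+1]addn1.
  apply: (within_bind (Q1 := fun arr' => P x (arr' x) /\ forall i, i != x -> arr' i = arr i)).
    apply: within_bind (Pl x (mem_head _ _)) _ => v Pv.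
    by apply: within_step; rewrite /upd eqxx; split=> // i /negbTE ->.
  move=> arr' [Px arr'E]; apply: within_weaken (IHl arr' _) (leqnn _) _.
    by move=> i il; apply: Pl; rewrite inE il orbT.
  move=> arr'' Parr'' i; rewrite inE; case: eqVneq => [->|ix] /=.
    by have := Parr'' x; case: ifP => // _ ->.
  by have := Parr'' i; case: ifP => // _ ->; apply: arr'E.
apply: within_weaken (foldP (iota 0 n) (fun=> d) _) _ _.
- by move=> i; rewrite mem_iota => /andP[_ /Pf].
- by rewrite size_iota.
- by move=> arr Parr i lt_in; have := Parr i; rewrite mem_iota lt_in.
Qed.

Lemma within_tabulate_step A n (f v : nat -> A) d :
  {in gtn n, f =1 v} ->
  within (tabulate n (fun i => step (f i)) d) (n * 2) (fun arr => {in gtn n, arr =1 v}).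
Proof.
by move=> fv; apply: (@within_tabulate _ _ _ _ _ (fun i a => a = v i)) => i /fv; apply: within_step.
Qed.

Lemma within_tabulate_sumM (R : realFieldType) n m (f : nat -> nat -> R) (v : nat -> R) d :
  (forall i, i < n -> (\sum_(j < m) f i j)%R = v i) ->
  within (tabulate n (fun i => sumM m (f i)) d) (n * m.+1) (fun arr => {in gtn n, arr =1 v}).
Proof.
move=> fv; apply: (@within_tabulate _ _ _ _ _ (fun i a => a = v i)) => i /fv <-.
exact: within_sumM.
Qed.

Lemma within_tabulate_ratio (R : realFieldType) n m (f g : nat -> nat -> R) d :
  within (tabulate n (fun i =>
            bindC (sumM m (f i)) (fun num =>
            bindC (sumM m (g i)) (fun den => step (num / den)%R))) d)
    (n * (m + (m + 1)).+1)
    (fun arr => {in gtn n, arr =1 fun i => (\sum_(j < m) f i j) / (\sum_(j < m) g i j)}%R).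
Proof.
apply: (@within_tabulate _ _ _ _ _ (fun i a => a = (\sum_(j < m) f i j) / (\sum_(j < m) g i j))%R).
move=> i _; apply: within_bind (within_sumM _ _) _ => _ ->.
by apply: within_bind (within_sumM _ _) _ => _ ->; apply: within_step.
Qed.

Definition msort_cost (n : nat) : nat := 2 * n * up_log 2 n.

Lemma up_log_halves n : 1 < n ->
  up_log 2 n./2 <= (up_log 2 n).-1 /\ up_log 2 (n - n./2) <= (up_log 2 n).-1.
Proof.
move=> n_gt1; suff ub : up_log 2 (n - n./2) <= (up_log 2 n).-1.
  by split=> //; apply: leq_trans ub; apply: leq_up_log; rewrite -!divn2; lia.
apply: up_log_min => //; have := up_logP n (isT : 1 < 2).
have : 0 < up_log 2 n by rewrite up_log_gt0.
case: (up_log 2 n) => [|u] //= _; rewrite expnS -!divn2; lia.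
Qed.

Lemma msort_cost_split n : 1 < n ->
  n + (msort_cost n./2 + (msort_cost (n - n./2) + (n./2 + (n - n./2)))) <= msort_cost n.
Proof.
move=> n_gt1; have [] := up_log_halves n_gt1; rewrite /msort_cost.
have : 0 < up_log 2 n by rewrite up_log_gt0.
have : n./2 <= n by rewrite -divn2 leq_div.
move: (up_log 2 n./2) (up_log 2 (n - n./2)) (up_log 2 n) n./2 => u1 u2 [|u] // h /=.
nia.
Qed.

Section MergeSort.
Variables (T : eqType) (le : rel T).
Hypothesis le_total : total le.

Lemma within_mergeM s1 s2 :
  within (mergeM le s1 s2) (size s1 + size s2) (eq^~ (merge le s1 s2)).
Proof.
elim: s1 s2 => [|x s1 IHs1] s2; first by [].
elim: s2 => [|y s2 IHs2]; first by rewrite /= addn0.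
move: IHs2 (IHs1 (y :: s2)); rewrite /within /= /bindC; case: (le x y).
  by move=> _; case: mergeM => r c /= [-> le_c]; split=> //; lia.
by case: (_ s2) => r c /= [-> le_c] _; split=> //; lia.
Qed.

Lemma within_msortF fuel s : size s <= fuel ->
  within (msortF le fuel s) (msort_cost (size s)) (fun r => perm_eq r s /\ sorted le r).
Proof.
elim: fuel s => [|fuel IHfuel] [|x [|y s]] // s_le; try by split.
set s' := x :: y :: s in s_le *; set h := (size s')./2.
have -> : msortF le fuel.+1 s' = bindC (costed (size s') (take h s', drop h s'))
   (fun p => bindC (msortF le fuel p.1) (fun r1 =>
             bindC (msortF le fuel p.2) (fun r2 => mergeM le r1 r2))) by [].
have h_gt0 : 0 < h by rewrite /h -divn2 divn_gt0.
have h_lt : h < size s' by rewrite /h -divn2 ltn_Pdiv.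
have size_take_h : size (take h s') = h by rewrite size_take h_lt.
have size_drop_h : size (drop h s') = size s' - h by rewrite size_drop.
eapply within_le.
- apply: within_bind (within_costed _ (erefl _)) _ => _ <-.
  apply: within_bind (IHfuel (take h s') _) _ => [|r1 [perm_r1 sorted_r1]].
    by rewrite size_take_h; lia.
  apply: within_bind (IHfuel (drop h s') _) _ => [|r2 [perm_r2 sorted_r2]].
    by rewrite size_drop_h; lia.
  apply: (within_weaken (c' := size (take h s') + size (drop h s')) (within_mergeM r1 r2)).
    by rewrite (perm_size perm_r1) (perm_size perm_r2).
  move=> _ ->; split; last exact: merge_sorted.
  by rewrite perm_merge -[X in perm_eq _ X](cat_take_drop h) perm_cat.
- by rewrite size_take_h size_drop_h; apply: msort_cost_split.
Qed.

Lemma within_msortM s :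
  within (msortM le s) (msort_cost (size s)) (fun r => perm_eq r s /\ sorted le r).
Proof. exact: within_msortF. Qed.
End MergeSort.

Local Open Scope ring_scope.

Definition is_pos {R : realFieldType} (x : item R) : bool := x.1.2.

Definition in_bucket {R : realFieldType} (b : nat -> nat) (k : nat) (x : item R) : bool :=
  ~~ is_pos x && (b x.2 == k).

Definition bucket_labelling {R : realFieldType} (b : nat -> nat) (s : seq (item R)) : Prop :=
  forall t1 x t2, s = t1 ++ x :: t2 -> ~~ is_pos x -> b x.2 = count is_pos t1.

Section Items.
Variable R : realFieldType.

Lemma before_trans : transitive (@before R).
Proof.
move=> [[vb pb] ib] [[va pa] ia] [[vc pc] ic] /=.
case/orP=> [lt_ba|/andP[/eqP eq_ab pab]]; case/orP=> [lt_cb|/andP[/eqP eq_bc pbc]].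
- by rewrite (lt_trans lt_cb lt_ba).
- by rewrite -eq_bc lt_ba.
- by rewrite eq_ab lt_cb.
- by rewrite eq_ab eq_bc ltxx eqxx; move: pab pbc; case: pa; case: pb; case: pc.
Qed.

Lemma before_total : total (@before R).
Proof. by move=> [[va pa] ia] [[vb pb] ib] /=; case: ltgtP => //= _; case: pa; case: pb. Qed.

Variables (np nn : nat) (sp sn : nat -> R).

Definition pos_items : seq (item R) := map (fun i => (sp i, true, i)) (iota 0 np).
Definition neg_items : seq (item R) := map (fun j => (sn j, false, j)) (iota 0 nn).

Lemma bucket_ofE j : bucket_of np sp sn j = count (fun i => sn j < sp i) (iota 0 np).
Proof.
rewrite /bucket_of -sum1_count [RHS]big_mkcond /=.
rewrite -(big_mkord xpredT (fun i => nat_of_bool (sn j < sp i))) /index_iota subn0.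
by apply: eq_bigr => i _; case: (_ < _).
Qed.

Lemma bucket_of_le j : (bucket_of np sp sn j <= np)%N.
Proof. by rewrite bucket_ofE -[leqRHS](size_iota 0) count_size. Qed.

Lemma bucket_of_sorted s : perm_eq s (pos_items ++ neg_items) -> sorted (@before R) s ->
  bucket_labelling (bucket_of np sp sn) s.
Proof.
move=> perm_s sorted_s t1 x t2 s_eq neg_x.
have : x \in pos_items ++ neg_items by rewrite -(perm_mem perm_s) s_eq mem_cat mem_head orbT.
rewrite mem_cat => /orP[/mapP[i _ x_eq]|/mapP[j _ x_eq]]; first by rewrite x_eq in neg_x.
subst x.
have := sorted_s; rewrite sorted_pairwise; last exact: before_trans.
rewrite s_eq pairwise_cat pairwise_cons => /and3P[/allrelP above _ /andP[/allP below _]].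
pose above_j (y : item R) := is_pos y && (sn j < y.1.1).
have above_t1 : count above_j t1 = count is_pos t1.
  apply: eq_in_count => -[[v []] i] // /above/(_ (mem_head _ _)).
  by rewrite /above_j /= andbF orbF.
have above_t2 : count above_j ((sn j, false, j) :: t2) = 0%N.
  apply/eqP; rewrite -leqn0 leqNgt -has_count; apply/hasPn => -[[v []] i] //.
  case/predU1P=> [//|/below /=]; rewrite /above_j /= andbT -leNgt.
  by case/orP=> [/ltW|/eqP ->].
have := permP perm_s above_j; rewrite s_eq count_cat above_t1 above_t2 addn0 => ->.
by rewrite count_cat !count_map count_pred0 addn0 bucket_ofE.
Qed.
End Items.

Section Scan.
Variables (R : realFieldType) (b : nat -> nat).
Implicit Types (x : item R) (t : seq (item R)) (st : bstate R).

Record scan_inv t st : Prop := ScanInv {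
  scan_k : bs_k st = count is_pos t;
  scan_cnt : bs_cnt st = count (in_bucket b (count is_pos t)) t;
  scan_sum : bs_sum st = \sum_(x <- t | in_bucket b (count is_pos t) x) x.1.1;
  scan_size : forall k, (k < count is_pos t)%N -> bs_size st k = count (in_bucket b k) t;
  scan_proto : forall k, (k < count is_pos t)%N ->
    bs_proto st k = (\sum_(x <- t | in_bucket b k x) x.1.1) / (count (in_bucket b k) t)%:R;
  scan_of : forall x, x \in t -> ~~ is_pos x -> bs_of st x.2 = b x.2;
  scan_bucket_le : forall x, x \in t -> ~~ is_pos x -> (b x.2 <= count is_pos t)%N
}.

Lemma scan_inv_nil : scan_inv [::] (init_bstate R).
Proof. by split=> //=; rewrite big_nil. Qed.

Lemma count_rcons (P : pred (item R)) t x : count P (rcons t x) = (count P t + P x)%N.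
Proof. by rewrite -cats1 count_cat /= addn0. Qed.

Lemma scan_inv_close t st v j :
  scan_inv t st -> scan_inv (rcons t (v, true, j)) (close_bucket st).
Proof.
move=> inv; set K := count is_pos t.
have K_rcons : count is_pos (rcons t (v, true, j)) = K.+1 by rewrite count_rcons addn1.
have old_bucket x : x \in t -> ~~ is_pos x -> b x.2 != K.+1.
  by move=> xt neg_x; have := scan_bucket_le inv xt neg_x; rewrite /K; lia.
have mem_rcons_t x : x \in rcons t (v, true, j) -> ~~ is_pos x -> x \in t.
  by rewrite mem_rcons inE => /predU1P[->|].
split; rewrite ?K_rcons /=.
- by rewrite (scan_k inv).
- rewrite count_rcons addn0; apply/esym/eqP; rewrite -leqn0 leqNgt -has_count.
  apply/hasPn => x xt; rewrite /in_bucket; case: (boolP (is_pos x)) => //= neg_x.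
  exact: old_bucket.
- rewrite big_rcons /= addr0 big1_seq // => x /andP[/andP[neg_x /eqP bx] xt].
  by have := old_bucket x xt neg_x; rewrite bx eqxx.
- move=> k; rewrite ltnS (scan_k inv) count_rcons addn0 /upd leq_eqVlt.
  case: eqVneq => [->|_] /= lt_k; first by rewrite (scan_cnt inv).
  exact: (scan_size inv).
- move=> k; rewrite ltnS (scan_k inv) count_rcons big_rcons /= addn0 addr0 /upd leq_eqVlt.
  case: eqVneq => [->|_] /= lt_k; first by rewrite (scan_cnt inv) (scan_sum inv).
  exact: (scan_proto inv).
- by move=> x x_in neg_x; apply: (scan_of inv (mem_rcons_t x x_in neg_x)).
- by move=> x x_in neg_x; apply/leqW/(scan_bucket_le inv (mem_rcons_t x x_in neg_x)).
Qed.

Lemma scan_inv_push t st v j : b j = count is_pos t ->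
  scan_inv t st -> scan_inv (rcons t (v, false, j)) (pass_item st (v, false, j)).1.
Proof.
move=> bj inv; set K := count is_pos t.
have K_rcons : count is_pos (rcons t (v, false, j)) = K by rewrite count_rcons addn0.
have in_bucket_new k : in_bucket b k (v, false, j) = (K == k) by rewrite /in_bucket /= bj.
split; rewrite ?K_rcons /=.
- exact: (scan_k inv).
- by rewrite (scan_cnt inv) count_rcons in_bucket_new eqxx addn1.
- by rewrite (scan_sum inv) big_rcons in_bucket_new eqxx.
- move=> k lt_k; rewrite (scan_size inv) // count_rcons in_bucket_new.
  by rewrite (gtn_eqF lt_k) addn0.
- move=> k lt_k; rewrite (scan_proto inv) // count_rcons big_rcons in_bucket_new.
  by rewrite (gtn_eqF lt_k) addn0 /= addr0.
- move=> x; rewrite mem_rcons inE /upd (scan_k inv) => /predU1P[-> _|x_in neg_x].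
    by rewrite eqxx bj.
  by case: eqVneq => [->|_]; [rewrite bj|apply: (scan_of inv)].
- move=> x; rewrite mem_rcons inE => /predU1P[-> _|x_in neg_x]; first by rewrite bj.
  exact: (scan_bucket_le inv).
Qed.

Lemma within_scan s : bucket_labelling b s ->
  within (foldM (@pass_item R) (init_bstate R) s) (size s) (scan_inv s).
Proof.
elim/last_ind: s => [|t [[v p] j] IHt] buckets_t; first by split=> //; apply: scan_inv_nil.
rewrite foldM_rcons size_rcons -addn1.
apply: within_bind (IHt _) _ => [t1 x t2 t_eq|st inv_st].
  by apply: buckets_t; rewrite t_eq rcons_cat.
case: p buckets_t => buckets_t; apply: within_step; first exact: scan_inv_close.
by apply: scan_inv_push inv_st; apply: (buckets_t t (v, false, j) [::]); rewrite ?cats1.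
Qed.
End Scan.

Section Buckets.
Variables (R : realFieldType) (np nn : nat) (sp sn : nat -> R).
Local Notation b := (bucket_of np sp sn).

Definition buckets_computed (st : bstate R) : Prop :=
  [/\ {in gtn np.+1, bs_size st =1 bsize np nn sp sn},
      {in gtn np.+1, bs_proto st =1 proto np nn sp sn} &
      {in gtn nn, bs_of st =1 b}].

Lemma buckets_computed_close s st : perm_eq s (pos_items np sp ++ neg_items nn sn) ->
  scan_inv b s st -> buckets_computed (close_bucket st).
Proof.
move=> perm_s inv; have count_s P := permP perm_s P.
have npos : count is_pos s = np.
  rewrite count_s count_cat !count_map count_pred0 addn0.
  by rewrite (eq_count (a2 := predT)) ?count_predT ?size_iota.
have bucket_size k : count (in_bucket b k) s = bsize np nn sp sn k.
  rewrite count_s count_cat !count_map count_pred0 add0n -sum1_count big_mkcond /= /bsize.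
  rewrite -(big_mkord xpredT (fun j => nat_of_bool (b j == k))) /index_iota subn0.
  by apply: eq_bigr => j _; rewrite /in_bucket /=; case: (_ == _).
have bucket_sum k : \sum_(x <- s | in_bucket b k x) x.1.1 = \sum_(j < nn | b j == k) sn j.
  rewrite (perm_big _ perm_s) big_cat !big_map /= big_pred0 // add0r.
  by rewrite -(big_mkord (fun j => b j == k) sn) /index_iota subn0.
have k_eq := scan_k inv; rewrite npos in k_eq.
split=> [k|k|j]; rewrite /= /upd ?k_eq.
- rewrite inE ltnS leq_eqVlt => /predU1P[->|lt_k]; first by rewrite eqxx (scan_cnt inv) npos.
  by rewrite (ltn_eqF lt_k) (scan_size inv) ?npos.
- rewrite inE ltnS leq_eqVlt => /predU1P[->|lt_k].
    by rewrite eqxx (scan_cnt inv) (scan_sum inv) npos bucket_size bucket_sum.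
  by rewrite (ltn_eqF lt_k) (scan_proto inv) ?npos ?bucket_size ?bucket_sum.
- move=> lt_j; apply: (scan_of inv (x := (sn j, false, j))) => //.
  by rewrite (perm_mem perm_s) mem_cat; apply/orP; right; apply/mapP; exists j; rewrite ?mem_iota.
Qed.

Definition front_cost : nat := msort_cost (np + nn) + 3 * (np + nn) + 1.

Lemma within_bucketing B (K : bstate R -> C B) c (Q : B -> Prop) :
  (forall st, buckets_computed st -> within (K st) c Q) ->
  within
    (bindC (mapM (fun i => step ((sp i, true, i) : item R)) (iota 0 np)) (fun lp =>
     bindC (mapM (fun j => step ((sn j, false, j) : item R)) (iota 0 nn)) (fun ln =>
     bindC (costed (size lp) (lp ++ ln)) (fun all =>
     bindC (msortM (@before R) all) (fun sorted =>
     bindC (foldM (@pass_item R) (init_bstate R) sorted) (fun st0 =>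
     bindC (step (close_bucket st0)) K))))))
    (front_cost + c) Q.
Proof.
move=> K_within; eapply within_le.
- apply: within_bind (within_mapM_step _ _) _ => _ ->.
  apply: within_bind (within_mapM_step _ _) _ => _ ->.
  apply: within_bind (within_costed _ (erefl _)) _ => _ <-.
  apply: within_bind (within_msortM (@before_total R) _) _ => s [perm_s sorted_s].
  apply: (within_bind (c1 := size (pos_items np sp ++ neg_items nn sn))).
    apply: within_weaken (within_scan (bucket_of_sorted perm_s sorted_s)) _ (fun _ inv => inv).
    by rewrite (perm_size perm_s).
  by move=> st0 inv; apply: within_bind (within_step (buckets_computed_close perm_s inv)) K_within.
- by rewrite /front_cost size_cat !size_map !size_iota; lia.
Qed.
End Buckets.

Section Gradients.
Variables (R : realFieldType) (delta : R) (np nn : nat) (sp sn iou : nat -> R).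

Definition raw_pos_grad (rs : bool) (i : nat) : R :=
  if rs then - lRb delta np nn sp sn i + lSstar delta np sp iou i - lS delta np sp iou i
             + \sum_(j < np) (lS delta np sp iou j - lSstar delta np sp iou j) * pS delta np sp iou i j
  else - lRb delta np nn sp sn i.

Definition pos_grad (rs : bool) (i : nat) : R :=
  if rs then gRS_pos delta np nn sp sn iou i else gAP_pos delta np nn sp sn i.

Lemma raw_pos_gradE rs i : raw_pos_grad rs i / np%:R = pos_grad rs i.
Proof. by case: rs; rewrite /raw_pos_grad /pos_grad /gRS_pos /gAP_pos mulrC // mulrN mulNr. Qed.

Definition gradients_ok (rs : bool) (res : (nat -> R) * (nat -> R)) : Prop :=
  {in gtn np, res.1 =1 pos_grad rs} /\ {in gtn nn, res.2 =1 g_neg delta np nn sp sn}.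

Lemma within_lRb (nfp : nat -> R) : {in gtn np, nfp =1 NFPb delta np nn sp sn} ->
  within (tabulate np (fun i =>
            bindC (sumM np (fun j => Hstep delta (sp j - sp i))) (fun rp =>
            step (nfp i / (rp + nfp i)))) 0)
    (np * (np + 1).+1) (fun lR => {in gtn np, lR =1 lRb delta np nn sp sn}).
Proof.
move=> nfp_ok; apply: (@within_tabulate _ _ _ _ _ (fun i a => a = lRb delta np nn sp sn i)).
move=> i lt_i; apply: within_bind (within_sumM _ _) _ => _ ->.
by apply: within_step; rewrite nfp_ok.
Qed.

Lemma within_primary (sz : nat -> nat) (pr : nat -> R) (nfp lR : nat -> R) :
  {in gtn np.+1, sz =1 bsize np nn sp sn} -> {in gtn np.+1, pr =1 proto np nn sp sn} ->
  {in gtn np, nfp =1 NFPb delta np nn sp sn} -> {in gtn np, lR =1 lRb delta np nn sp sn} ->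
  within (tabulate np (fun i =>
            tabulate np.+1 (fun k =>
              step (lR i * ((sz k)%:R * Hstep delta (pr k - sp i) / nfp i))) 0) (fun _ => 0))
    (np * (np.+1 * 2).+1)
    (fun prim => forall i, (i < np)%N ->
       {in gtn np.+1, prim i =1 fun k => lRb delta np nn sp sn i * pkb delta np nn sp sn k i}).
Proof.
move=> sz_ok pr_ok nfp_ok lR_ok.
apply: (@within_tabulate _ _ _ _ _ (fun i arr =>
  {in gtn np.+1, arr =1 fun k => lRb delta np nn sp sn i * pkb delta np nn sp sn k i})) => i lt_i.
by apply: within_tabulate_step => k lt_k; rewrite lR_ok // sz_ok // pr_ok // nfp_ok.
Qed.

Definition pos_grad_cost : nat := np * (6 * np + 7).

Lemma within_raw_pos_grad rs (lR : nat -> R) : {in gtn np, lR =1 lRb delta np nn sp sn} ->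
  within
    (if rs then
       bindC (tabulate np (fun i =>
                bindC (sumM np (fun j => Hstep delta (sp j - sp i) * (1 - iou j))) (fun num =>
                bindC (sumM np (fun j => Hstep delta (sp j - sp i))) (fun den =>
                step (num / den)))) 0) (fun lSa =>
       bindC (tabulate np (fun i =>
                bindC (sumM np (fun j => Hstep delta (sp j - sp i)
                          * (nat_of_bool (iou i <= iou j))%:R * (1 - iou j))) (fun num =>
                bindC (sumM np (fun j => Hstep delta (sp j - sp i)
                          * (nat_of_bool (iou i <= iou j))%:R)) (fun den =>
                step (num / den)))) 0) (fun lSs =>
       bindC (tabulate np (fun i =>
                sumM np (fun k => Hstep delta (sp k - sp i) * (nat_of_bool (iou k < iou i))%:R)) 0)
             (fun dS =>
       tabulate np (fun i =>
         bindC (sumM np (fun j => (lSa j - lSs j) * (Hstep delta (sp i - sp j)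
                   * (nat_of_bool (iou i < iou j))%:R / dS j))) (fun pp =>
         step (- lR i + lSs i - lSa i + pp))) 0)))
     else tabulate np (fun i => step (- lR i)) 0)
    pos_grad_cost (fun g => {in gtn np, g =1 raw_pos_grad rs}).
Proof.
move=> lR_ok; case: rs; last first.
  apply: within_weaken (within_tabulate_step _ _) _ _ => [i /lR_ok -> //||//].
  by rewrite /pos_grad_cost leq_mul2l; apply/orP; right; lia.
eapply within_le.
- apply: within_bind (within_tabulate_ratio _ _ _ _ _) _ => lSa lSa_ok.
  apply: within_bind (within_tabulate_ratio _ _ _ _ _) _ => lSs lSs_ok.
  apply: within_bind (within_tabulate_sumM _ (fun _ _ => erefl)) _ => dS dS_ok.
  apply: (@within_tabulate _ _ _ _ _ (fun i a => a = raw_pos_grad true i)) => i lt_i.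
  apply: within_bind (within_sumM _ _) _ => _ ->; apply: within_step.
  rewrite /raw_pos_grad lR_ok // lSa_ok // lSs_ok //; congr (_ + _).
  by apply: eq_bigr => j _; rewrite lSa_ok ?lSs_ok ?dS_ok ?inE.
- by rewrite /pos_grad_cost; nia.
Qed.

Lemma within_distribute rs (sz bof : nat -> nat) (prim : nat -> nat -> R) (graw : nat -> R) :
  {in gtn np.+1, sz =1 bsize np nn sp sn} -> {in gtn nn, bof =1 bucket_of np sp sn} ->
  (forall i, (i < np)%N ->
     {in gtn np.+1, prim i =1 fun k => lRb delta np nn sp sn i * pkb delta np nn sp sn k i}) ->
  {in gtn np, graw =1 raw_pos_grad rs} ->
  within
    (bindC (tabulate np.+1 (fun k => sumM np (fun i => prim i k)) 0) (fun gproto =>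
     bindC (tabulate nn (fun j => step (gproto (bof j) / (sz (bof j))%:R)) 0) (fun gneg_raw =>
     bindC (tabulate np (fun i => step (graw i / np%:R)) 0) (fun gpos =>
     bindC (tabulate nn (fun j => step (gneg_raw j / np%:R)) 0) (fun gneg =>
     retC (gpos, gneg))))))
    (np.+1 * np.+1 + (nn * 2 + (np * 2 + nn * 2))) (gradients_ok rs).
Proof.
move=> sz_ok bof_ok prim_ok graw_ok.
pose proto_grad k := \sum_(i < np) lRb delta np nn sp sn i * pkb delta np nn sp sn k i.
apply: within_bind (within_tabulate_sumM _ (v := proto_grad) _) _ => [k lt_k|gproto gproto_ok].
  by apply: eq_bigr => i _; rewrite prim_ok.
pose neg_grad_raw j :=
  proto_grad (bucket_of np sp sn j) / (bsize np nn sp sn (bucket_of np sp sn j))%:R.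
apply: within_bind (within_tabulate_step _ (v := neg_grad_raw) _) _ => [j lt_j|gn gn_ok].
  by rewrite bof_ok // gproto_ok ?sz_ok // inE ltnS bucket_of_le.
apply: within_bind (within_tabulate_step _ (v := pos_grad rs) _) _ => [i lt_i|gpos gpos_ok].
  by rewrite graw_ok // raw_pos_gradE.
apply: within_bind_ret (within_tabulate_step _ (v := g_neg delta np nn sp sn) _) _
  => [j lt_j|gneg gneg_ok].
  by rewrite gn_ok // /g_neg -mulr_suml mulrC.
by split.
Qed.

Definition bucketed_cost : nat := front_cost np nn + (12 * np.+1 ^ 2 + 4 * nn).

Lemma within_bucketed rs :
  within (bucketed rs delta np nn sp sn iou) bucketed_cost (gradients_ok rs).
Proof.
eapply within_le.
- apply: within_bucketing => st [sz_ok pr_ok bof_ok].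
  apply: within_bind (within_tabulate_sumM _ (v := NFPb delta np nn sp sn) _) _ => [i _|nfp nfp_ok].
    by apply: eq_bigr => k _; rewrite sz_ok ?pr_ok ?inE.
  apply: within_bind (within_lRb nfp_ok) _ => lR lR_ok.
  apply: within_bind (within_primary sz_ok pr_ok nfp_ok lR_ok) _ => prim prim_ok.
  apply: within_bind (within_raw_pos_grad rs lR_ok) _ => graw graw_ok.
  exact: within_distribute.
- by rewrite /bucketed_cost leq_add2l /pos_grad_cost; nia.
Qed.

End Gradients.

Lemma up_log_le_trunc_log n : (up_log 2 n <= (trunc_log 2 n).+1)%N.
Proof. exact/up_log_min/ltnW/trunc_log_ltn. Qed.

Lemma bucketed_cost_bound np nn : (0 < np)%N ->
  (bucketed_cost np nn <= 60 * maxn ((np + nn) * trunc_log 2 (np + nn)) (np ^ 2))%N.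
Proof.
move=> np_gt0; rewrite /bucketed_cost /front_cost /msort_cost.
set n := (np + nn)%N; set t := trunc_log 2 n; set M := maxn _ _.
have sort_le : (n * t <= M)%N by rewrite leq_maxl.
have sq_le : (np * np <= M)%N by rewrite mulnn leq_maxr.
have n_le : (n <= M)%N.
  have [n_gt1|n_le1] := ltnP 1 n; last by apply: leq_trans sq_le; rewrite /n; nia.
  by apply: leq_trans sort_le; rewrite leq_pmulr // trunc_log_gt0.
have := up_log_le_trunc_log n; rewrite -/t.
move: (up_log 2 n) => u; nia.
Qed.

Theorem theorem2 :
  exists Cst : nat,
  forall (R : realFieldType) (delta : R) (np nn : nat) (sp sn iou : nat -> R),
    (0 < np)%N -> 0 <= delta ->
    (forall i, (i < np)%N -> 0 <= iou i <= 1) ->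
    forall rs : bool,
    let res := bucketed rs delta np nn sp sn iou in
    (forall i, (i < np)%N ->
       res.1.1 i = (if rs then gRS_pos delta np nn sp sn iou i
                    else gAP_pos delta np nn sp sn i)) /\
    (forall j, (j < nn)%N -> res.1.2 j = g_neg delta np nn sp sn j) /\
    (res.2 <= Cst * maxn ((np + nn) * trunc_log 2 (np + nn)) (np ^ 2))%N.
Proof.
exists 60%N => R delta np nn sp sn iou np_gt0 _ _ rs res.
have [[pos_ok neg_ok] cost_le] := within_bucketed delta np nn sp sn iou rs.
split; [exact: pos_ok | split; [exact: neg_ok |]].
exact: leq_trans cost_le (bucketed_cost_bound nn np_gt0).
Qed.
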